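(* Let $G$ be a $2$-edge-connected cubic multigraph (loopless) of order $n$ such that there is exactly one pair of vertices $\{u,v\}$ joined by more than one edge, and they are joined by exactly two edges, and such that $G$ is claw-free and diamond-free. Then $\gamma_P(G) \le (n-2)/6$.
   Context: A multigraph is claw-free (resp. diamond-free) if its underlying simple graph has no induced subgraph isomorphic to $K_{1,3}$ (resp. to the diamond $K_4-e$). A multigraph is cubic if every vertex is incident with exactly three edges (counting multiplicity). For $S \subseteq V(G)$: initially all vertices of $S$ and their neighbors are observed; then, repeatedly, any vertex that is the only unobserved neighbor of some observed vertex becomes observed. $S$ is a power dominating set if eventually all vertices are observed; $\gamma_P(G)$ is the minimum size of a power dominating set. *)

From mathcomp Require Import all_boot.
From mathcomp Require Import boolp.
Set Implicit Arguments. Unset Strict Implicit. Unset Printing Implicit Defensive.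

(* A finite multigraph on vertex type T is given by its edge-multiplicity
   function m : T -> T -> nat (m x y = number of edges joining x and y). *)
Section Multigraph.
Variable T : finType.
Implicit Types (m : T -> T -> nat) (S X : {set T}).

Definition symmetric_mult m := forall x y, m x y = m y x.
Definition loopless m := forall x, m x x = 0.

Definition adj m : rel T := fun x y => (x != y) && (0 < m x y).

Definition cubic m := forall x, \sum_(y : T) m x y = 3.

Definition connected_mg m := forall x y : T, connect (adj m) x y.

Definition remove_edge m (a b : T) : T -> T -> nat :=
  fun x y => if ((x == a) && (y == b)) || ((x == b) && (y == a))
             then (m x y).-1 else m x y.

Definition two_edge_connected m :=
  connected_mg m /\ forall a b, 0 < m a b -> connected_mg (remove_edge m a b).

Definition claw_free m := forall x a b c : T,
  adj m x a -> adj m x b -> adj m x c ->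
  a != b -> a != c -> b != c ->
  adj m a b || adj m a c || adj m b c.

(* diamond-free: no induced K_4 - e: vertices a b c d distinct,
   a,b adjacent to each other and to c and d, c d non-adjacent *)
Definition diamond_free m := forall a b c d : T,
  uniq [:: a; b; c; d] ->
  adj m a b -> adj m a c -> adj m a d -> adj m b c -> adj m b d ->
  adj m c d.

Definition closed_nbhd m S : {set T} := S :|: [set w | [exists v in S, adj m v w]].

Definition prop_step m X : {set T} :=
  X :|: [set w | [exists v in X,
           adj m v w && (w \notin X) &&
           [forall z, (adj m v z && (z \notin X)) ==> (z == w)]]].

Definition power_dominating m S :=
  exists k, iter k (prop_step m) (closed_nbhd m S) = [set: T].

(* power domination number: minimum size of a power dominating set
   (setT is always one, of size #|T|) *)
Definition gammaP m : nat :=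
  \big[minn/#|T|]_(S : {set T} | `[< power_dominating m S >]) #|S|.

End Multigraph.

(* Claw-freeness puts every vertex outside the double edge uv in a triangle, and
   diamond-freeness makes it unique (two triangles at x would span a K4, which
   is closed under adjacency, hence all of G, although u has degree 2);
   2-edge-connectivity rules out a triangle through u or v.
   So V splits into (n+1)/3 cliques, the triangles and {u, v}, and every vertex
   has exactly one neighbour, its mate, outside its clique.  Order the cliques
   and pick one vertex in every clique A with at most |A| - 2 vertices mated
   into later cliques: in the unobserved clique of largest rank some vertex
   would force the rest, so these picks power dominate.  A clique is picked for
   at most one of an order and its reverse, whence 2 gamma_P <= (n+1)/3; as the
   mates form a fixed-point-free involution, n is even and (n+1)/3 is odd. *)

From mathcomp Require Import all_boot all_order zify.
From mathcomp Require Import boolp.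
Set Implicit Arguments. Unset Strict Implicit. Unset Printing Implicit Defensive.
Import Order.TTheory.

Lemma gammaP_le (T : finType) (m : T -> T -> nat) (S : {set T}) :
  power_dominating m S -> gammaP m <= #|S|.
Proof.
by move=> pdS; rewrite /gammaP -minEnat -leEnat; apply: bigmin_le_cond; exact: asboolT.
Qed.

Lemma connect_sub_closed (T : finType) (e : rel T) (C : {set T}) x y :
  (forall a b, a \in C -> e a b -> b \in C) -> connect e x y -> x \in C -> y \in C.
Proof.
move=> closedC /connectP [p ep ->]; elim: p x ep => //= a p IH x /andP [xa ep] xC.
exact: IH ep (closedC _ _ xC xa).
Qed.

Lemma involution_card_even (T : finType) (f : T -> T) :
  involutive f -> (forall x, f x != x) -> ~~ odd #|T|.
Proof.
move=> fK f_neq; set A := [set x | enum_rank x < enum_rank (f x)].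
have rank_neq x : enum_rank x != enum_rank (f x).
  by apply: contraNneq (f_neq x) => /enum_rank_inj <-.
have CA : ~: A = f @: A.
  apply/setP => x; rewrite !inE; apply/idP/imsetP => [xA | [y yA ->]].
    exists (f x); last by rewrite fK.
    by rewrite inE fK ltn_neqAle eq_sym rank_neq leqNgt.
  by move: yA; rewrite inE fK; lia.
by rewrite -(cardsC A) CA card_imset ?addnn ?odd_double //; exact: can_inj fK.
Qed.

Lemma iter_extensive_fixed (T : finType) (f : {set T} -> {set T}) (X : {set T}) :
  (forall Y : {set T}, Y \subset f Y) -> f (iter #|T| f X) = iter #|T| f X.
Proof.
move=> f_ext.
have fixed_or_large k : f (iter k f X) = iter k f X \/ k <= #|iter k f X|.
  elim: k => [|k IH]; first by right.
  have [fixk|nfixk] := eqVneq (f (iter k f X)) (iter k f X).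
    by left; rewrite /= !fixk.
  right; case: IH => [fixk|le_k]; first by rewrite fixk eqxx in nfixk.
  apply: leq_ltn_trans le_k (proper_card _).
  by rewrite properEneq eq_sym nfixk f_ext.
have [//|full] := fixed_or_large #|T|.
have -> : iter #|T| f X = setT by apply/eqP; rewrite eqEcard subsetT cardsT.
by apply/eqP; rewrite eqEsubset subsetT f_ext.
Qed.

Definition force_closed (T : finType) (m : T -> T -> nat) (F : {set T}) :=
  forall x z, x \in F -> adj m x z ->
  (forall y, adj m x y -> (y \in F) || (y == z)) -> z \in F.

Lemma prop_step_fixed_force_closed (T : finType) (m : T -> T -> nat) (F : {set T}) :
  prop_step m F = F -> force_closed m F.
Proof.
move=> Ffixed x z xF xz onlyz; apply: contraT => zF.
suff : z \in prop_step m F by rewrite Ffixed (negbTE zF).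
rewrite !inE; apply/orP; right; apply/existsP; exists x; rewrite xF xz zF /=.
by apply/forallP => y; apply/implyP => /andP [xy yF]; have := onlyz y xy; rewrite (negbTE yF).
Qed.

Lemma force_closed_power_dominating (T : finType) (m : T -> T -> nat) (S : {set T}) :
  (forall F : {set T}, closed_nbhd m S \subset F -> force_closed m F -> F = setT) ->
  power_dominating m S.
Proof.
have step_ext (Y : {set T}) : Y \subset prop_step m Y by exact: subsetUl.
move=> full; exists #|T|; apply: full.
  by elim: #|T| => //= k IH; exact: subset_trans IH (step_ext _).
exact/prop_step_fixed_force_closed/iter_extensive_fixed.
Qed.

Lemma two_edge_connected_no_bridge (T : finType) (m : T -> T -> nat) (C : {set T}) b c :
  two_edge_connected m -> b \in C -> c \notin C -> adj m b c -> m b c <= 1 ->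
  (forall y z, y \in C -> adj m y z -> (z \in C) || ((y == b) && (z == c))) -> False.
Proof.
move=> [_ edge_conn] bC cC /andP [_ mbc] mbc1 onlybc.
apply: (negP cC); apply: connect_sub_closed (edge_conn b c mbc b c) bC => y z yC.
rewrite /adj /remove_edge => /andP [yz].
case: ifP => [/orP [] /andP [/eqP yb /eqP zc] | not_bc] myz.
- by move: myz; rewrite yb zc; case: (m b c) mbc1 => [|[|]].
- by move: cC; rewrite -yb yC.
have /(onlybc y z yC) /orP [//|bc] : adj m y z by rewrite /adj yz myz.
by rewrite bc in not_bc.
Qed.

Section CliquePartition.
Variables (T : finType) (m : T -> T -> nat) (part : T -> {set T}) (mate : T -> T).
Local Notation adj := (adj m).
Hypotheses (adj_sym : symmetric adj)
  (part_self : forall x, x \in part x)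
  (part_eq : forall x y, y \in part x -> part y = part x)
  (part_clique : forall x y z, y \in part x -> z \in part x -> y != z -> adj y z)
  (adj_mate : forall x, adj x (mate x))
  (mate_out : forall x, mate x \notin part x)
  (adj_part_mate : forall x z, adj x z -> z \in part x \/ z = mate x).

Lemma mateK : involutive mate.
Proof.
move=> x; have := adj_mate x; rewrite adj_sym => /adj_part_mate [xm|//].
by have := mate_out x; rewrite (part_eq xm) part_self.
Qed.

Lemma mate_neq x : mate x != x.
Proof. by apply: contraNneq (mate_out x) => ->. Qed.

Definition parts := [set part x | x : T].

Lemma card_sum_parts : #|T| = \sum_(A in parts) #|A|.
Proof.
rewrite -cardsT -(card_partition (D := setT)) //; apply/and3P; split.
- by apply/eqP/setP => x; rewrite inE cover_imset; apply/bigcupP; exists x.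
- apply/trivIsetP => _ _ /imsetP [x _ ->] /imsetP [y _ ->] xy.
  rewrite -setI_eq0; apply/eqP/setP => z; rewrite !inE.
  apply/negP => /andP [/part_eq zx /part_eq zy].
  by rewrite -zx -zy eqxx in xy.
- by apply/imsetP => -[x _ x0]; have := part_self x; rewrite -x0 inE.
Qed.

Definition later (key : {set T} -> nat) (A : {set T}) :=
  [set y in A | key A < key (part (mate y))].

Definition seeds key := [set A in parts | #|later key A| + 2 <= #|A|].

Lemma force_closed_seeds key (F : {set T}) :
  (forall x, 2 <= #|part x|) -> force_closed m F ->
  (forall x, part x \in seeds key -> part x \subset F) -> F = setT.
Proof.
move=> part_ge2 Fforce Fseeds; apply/setP => x0; rewrite inE.
apply: contraT => x0F.
have [x xF xmax] := arg_maxnP (fun x => key (part x)) (P := fun x => x \notin F) x0F.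
set A := part x; set L := later key A.
have later_in z : key A < key (part z) -> z \in F.
  by apply: contraTT => /xmax; rewrite -leqNgt.
have mate_part_in y : y \in L -> part (mate y) \subset F.
  rewrite inE => /andP [_ lt_y]; apply/subsetP => z zy.
  by apply: later_in; rewrite (part_eq zy).
have LF : L \subset F.
  apply/subsetP => y yL; have my_part := subsetP (mate_part_in y yL).
  apply: (Fforce (mate y)); first exact/my_part/part_self.
    by rewrite adj_sym.
  by move=> z /adj_part_mate [/my_part ->|->] //; rewrite mateK eqxx orbT.
have not_seed : #|A| <= #|L| + 1.
  rewrite leqNgt; apply: contra xF => ltA.
  have seedA : A \in seeds key by rewrite inE imset_f //= -/A -/L; lia.
  exact: subsetP (Fseeds x seedA) x (part_self x).
have LA : L = A :\ x.
  apply/eqP; rewrite eqEcard; apply/andP; split.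
    apply/subsetP => y yL; rewrite in_setD1; have := subsetP LF y yL.
    by move: yL; rewrite inE => /andP [-> _]; case: eqP => // ->; rewrite (negbTE xF).
  by have := cardsD1 x A; rewrite part_self; lia.
have [y] : exists y, y \in A :\ x.
  by apply/card_gt0P; have := cardsD1 x A; have := part_ge2 x; rewrite -/A part_self; lia.
rewrite -LA => yL; have /setD1P [yx yA] : y \in A :\ x by rewrite -LA.
suff : x \in F by rewrite (negbTE xF).
apply: (Fforce y); first exact: (subsetP LF).
  by apply: (part_clique (x := x)) => //; rewrite eq_sym.
move=> z /adj_part_mate [zy|->]; last first.
  by rewrite (subsetP (mate_part_in y yL)) ?part_self.
case: (eqVneq z x) => [_|zx]; first by rewrite orbT.
rewrite (part_eq yA) in zy.
by rewrite (subsetP LF) // LA in_setD1 zx.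
Qed.

Definition leader y := [pick z in part y] == Some y.

Lemma leader_exists x : exists2 y, y \in part x & leader y.
Proof.
case E : [pick z in part x] => [y|]; last first.
  by move: E; case: pickP => [//|/(_ x)]; rewrite part_self.
have yx : y \in part x by move: E; case: pickP => // z zx [<-].
by exists y; rewrite // /leader (part_eq yx) E.
Qed.

Definition seed_set key := [set y | (part y \in seeds key) && leader y].

Lemma card_seed_set key : #|seed_set key| <= #|seeds key|.
Proof.
rewrite -(card_in_imset (f := part)); last first.
  move=> y z; rewrite !inE /leader => /andP [_ /eqP ly] /andP [_ /eqP lz] yz.
  by move: lz; rewrite -yz ly => /Some_inj.
by apply/subset_leq_card/subsetP => _ /imsetP [y + ->]; rewrite inE => /andP [].
Qed.

Lemma seed_set_power_dominating key :
  (forall x, 2 <= #|part x|) -> power_dominating m (seed_set key).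
Proof.
move=> part_ge2; apply: force_closed_power_dominating => F sub Fforce.
apply: (force_closed_seeds (key := key) part_ge2 Fforce) => x seedx; apply/subsetP => z zx.
have [y yx leady] := leader_exists x.
have yS : y \in seed_set key by rewrite inE (part_eq yx) seedx.
apply: (subsetP sub); rewrite in_setU; case: (eqVneq y z) => [<-|yz]; first by rewrite yS.
apply/orP; right; rewrite inE; apply/existsP; exists y.
by rewrite yS (part_clique yx zx yz).
Qed.

Definition rank_key (A : {set T}) : nat := enum_rank A.
Definition corank_key (A : {set T}) : nat := #|{set T}| - enum_rank A.

(* Every vertex of a part has its mate later for one of the two orders, so a
   part that is a seed for both has at least four vertices. *)
Lemma card_seeds_rank_corank :
  (forall x, #|part x| <= 3) -> #|seeds rank_key| + #|seeds corank_key| <= #|parts|.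
Proof.
move=> part_le3.
have seeds_disj : seeds rank_key :&: seeds corank_key = set0.
  apply/setP => A; rewrite !inE; apply/negP => /andP [/andP [/imsetP [x _ ->] r_seed]].
  case/andP => _ c_seed.
  have cover : part x \subset later rank_key (part x) :|: later corank_key (part x).
    apply/subsetP => y yx; rewrite !inE yx /=.
    have : part (mate y) != part x.
      by apply: contraNneq (mate_out y) => mx; rewrite (part_eq yx) -mx part_self.
    move/(contra_neq (@enum_rank_inj _ _ _))/(contra_neq (@ord_inj _ _ _)).
    rewrite /rank_key /corank_key.
    have rank_lt (B : {set T}) : enum_rank B < #|{set T}| by exact: ltn_ord.
    by have := rank_lt (part x); have := rank_lt (part (mate y)); lia.
  by have := subset_leq_card cover; rewrite cardsU; have := part_le3 x; lia.
have := cardsU (seeds rank_key) (seeds corank_key); rewrite seeds_disj cards0 subn0 => <-.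
by apply/subset_leq_card/subsetP => A; rewrite !inE => /orP [] /andP [].
Qed.

Lemma twice_gammaP_le_card_parts :
  (forall x, 2 <= #|part x| <= 3) -> 2 * gammaP m <= #|parts|.
Proof.
move=> part_card.
have gammaP_seeds key : gammaP m <= #|seeds key|.
  apply: leq_trans (card_seed_set key); apply/gammaP_le/seed_set_power_dominating.
  by move=> x; case/andP: (part_card x).
have := gammaP_seeds rank_key; have := gammaP_seeds corank_key.
have := card_seeds_rank_corank (fun x => proj2 (andP (part_card x))); lia.
Qed.

Lemma card_even : ~~ odd #|T|.
Proof. exact: involution_card_even mateK mate_neq. Qed.

End CliquePartition.

Lemma cards3 (T : finType) (a b c : T) :
  a != b -> a != c -> b != c -> #|[set a; b; c]| = 3.
Proof. by move=> ab ac bc; rewrite -setUA cardsU1 cards2 !inE bc (negbTE ab) (negbTE ac). Qed.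

Section Cubic.
Variables (T : finType) (m : T -> T -> nat).
Hypotheses (m_sym : symmetric_mult m) (m_loopless : loopless m) (m_cubic : cubic m).
Local Notation adj := (adj m).

Definition nbhd x := [set y | adj x y].

Lemma in_nbhd x y : (y \in nbhd x) = adj x y.
Proof. by rewrite inE. Qed.

Lemma adj_sym : symmetric adj.
Proof. by move=> x y; rewrite /adj eq_sym m_sym. Qed.

Lemma adj_neq x y : adj x y -> x != y.
Proof. by case/andP. Qed.

Lemma card_nbhd_le3 x : #|nbhd x| <= 3.
Proof.
rewrite -(m_cubic x) -sum1_card big_mkcond /=; apply: leq_sum => y _.
by rewrite inE; case: ifP => // /andP [].
Qed.

Lemma nbhd3 x a b c : a != b -> a != c -> b != c ->
  adj x a -> adj x b -> adj x c -> nbhd x = [set a; b; c].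
Proof.
move=> ab ac bc xa xb xc; apply/eqP; rewrite eq_sym eqEcard cards3 // card_nbhd_le3 andbT.
by apply/subsetP => y; rewrite !inE => /orP [/orP []|] /eqP ->.
Qed.

Lemma nbhd_double a b : a != b -> m a b = 2 ->
  exists w, [/\ nbhd a = [set b; w], w != b & w != a].
Proof.
move=> ab mab; have := m_cubic a; rewrite (bigD1 b) //= mab => rest.
have /existsP [w /andP [wb mw]] : [exists w, (w != b) && (0 < m a w)].
  apply: contraT; rewrite negb_exists => /forallP none; move: rest.
  by rewrite big1 // => y yb; have := none y; rewrite yb /= lt0n negbK => /eqP.
have wa : w != a by apply: contraTneq mw => ->; rewrite m_loopless.
rewrite (bigD1 w) //= in rest.
have /eqP : \sum_(y | (y != b) && (y != w)) m a y = 0 by lia.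
rewrite sum_nat_eq0 => /forallP others.
exists w; split => //; apply/setP => y; rewrite !inE /adj.
case: (eqVneq y b) => [->|yb]; first by rewrite ab mab.
case: (eqVneq y w) => [->|yw]; first by rewrite eq_sym wa mw orbT.
by have := others y; rewrite yb yw /= => /eqP ->; rewrite andbF.
Qed.

End Cubic.

Section ClawFreeCubic.
Variables (T : finType) (m : T -> T -> nat) (u v : T).
Hypotheses (m_sym : symmetric_mult m) (m_loopless : loopless m) (m_cubic : cubic m)
  (m_2ec : two_edge_connected m) (neq_uv : u != v) (m_uv : m u v = 2)
  (m_simple : forall x y, 1 < m x y -> (x == u) && (y == v) || (x == v) && (y == u))
  (m_claw : claw_free m) (m_diamond : diamond_free m).

Local Notation adj := (adj m).
Local Notation nbhd := (nbhd m).
Local Notation adj_sym := (adj_sym m_sym).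
Local Notation card_nbhd_le3 := (card_nbhd_le3 m_cubic).
Local Notation nbhd3 := (nbhd3 m_cubic).

Definition digon := [set u; v].

Lemma mult_le1 x y : x \notin digon -> m x y <= 1.
Proof.
move=> xD; rewrite leqNgt; apply: contra xD => /m_simple.
by rewrite !inE => /orP [] /andP [-> _]; rewrite ?orbT.
Qed.

Lemma card_nbhd_out x : x \notin digon -> #|nbhd x| = 3.
Proof.
move=> xD; rewrite -(m_cubic x) -sum1_card big_mkcond; apply: eq_bigr => y _ /=.
rewrite inE /adj; case: (eqVneq x y) => [<-|_]; first by rewrite m_loopless.
by have := mult_le1 y xD; case: (m x y) => [|[]].
Qed.

Section Digon.
Variables (w w' : T).
Hypotheses (nbhd_u : nbhd u = [set v; w]) (nbhd_v : nbhd v = [set u; w'])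
  (neq_wv : w != v) (neq_wu : w != u) (neq_w'u : w' != u) (neq_w'v : w' != v).

Lemma adj_u z : adj u z = (z == v) || (z == w).
Proof. by rewrite -in_nbhd nbhd_u !inE. Qed.

Lemma adj_v z : adj v z = (z == u) || (z == w').
Proof. by rewrite -in_nbhd nbhd_v !inE. Qed.

Lemma no_clique4 (K : {set T}) :
  #|K| = 4 -> {in K &, forall a b, a != b -> adj a b} -> False.
Proof.
move=> cardK cliqueK.
have nbhdK a : a \in K -> nbhd a = K :\ a.
  move=> aK; apply/eqP; rewrite eq_sym eqEcard; apply/andP; split.
    by apply/subsetP => b /setD1P [ba bK]; rewrite inE cliqueK // eq_sym.
  by have := cardsD1 a K; have := card_nbhd_le3 a; rewrite aK cardK; lia.
have [y yK] : exists y, y \in K by apply/card_gt0P; rewrite cardK.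
have uK : u \in K.
  apply: connect_sub_closed (m_2ec.1 y u) yK => a b aK ab.
  by move: ab; rewrite -in_nbhd nbhdK // => /setD1P [].
by have := cardsD1 u K; rewrite -nbhdK // nbhd_u cards2 uK cardK (eq_sym v) neq_wv.
Qed.

Lemma no_K4_minus_edge a b c d : c != d ->
  adj a b -> adj a c -> adj a d -> adj b c -> adj b d -> False.
Proof.
move=> cd ab ac ad bc bd.
have abcd : uniq [:: a; b; c; d].
  rewrite /= !inE !negb_or cd (adj_neq ab) (adj_neq ac) (adj_neq ad).
  by rewrite (adj_neq bc) (adj_neq bd).
have {}cd := m_diamond abcd ab ac ad bc bd.
apply: (@no_clique4 [set x in [:: a; b; c; d]]); first by rewrite cardsE (card_uniqP abcd).
move=> x y; rewrite !inE.
by move=> /or4P [] /eqP -> /or4P [] /eqP ->; rewrite ?eqxx // => _; rewrite // adj_sym.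
Qed.

Lemma neq_ww' : w != w'.
Proof.
apply/eqP => ww'.
have wD : w \notin digon by rewrite !inE negb_or neq_wu neq_wv.
have uw : adj w u by rewrite adj_sym adj_u eqxx orbT.
have vw : adj w v by rewrite adj_sym adj_v ww' eqxx orbT.
have [c wc cD] : exists2 c, adj w c & c \notin digon.
  apply/exists_inP; apply: contraT; rewrite negb_exists_in => /forall_inP nbhd_D.
  suff : #|nbhd w| <= #|digon| by rewrite card_nbhd_out // cards2 neq_uv.
  by apply/subset_leq_card/subsetP => z; rewrite in_nbhd => /nbhd_D; rewrite negbK.
have wc' := adj_neq wc; move: cD; rewrite !inE negb_or => /andP [cu cv].
apply: (@two_edge_connected_no_bridge _ m [set u; v; w] w c m_2ec).
- by rewrite !inE eqxx orbT.
- by rewrite !inE !negb_or cu cv eq_sym wc'.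
- exact: wc.
- exact: mult_le1 wD.
move=> y z; rewrite !inE -!orbA => /or3P [] /eqP ->.
- by rewrite adj_u => /orP [] /eqP ->; rewrite eqxx ?orbT.
- by rewrite adj_v -ww' => /orP [] /eqP ->; rewrite eqxx ?orbT.
rewrite -in_nbhd (nbhd3 _ _ _ uw vw wc) ?(eq_sym _ c) //.
by rewrite !inE -!orbA => /or3P [] /eqP ->; rewrite !eqxx ?orbT.
Qed.

Lemma digon_no_triangle a b c : a \in digon -> adj a b -> adj a c -> adj b c -> False.
Proof.
move=> aD ab ac bc; have bc' := adj_neq bc; have := bc; rewrite adj_sym => cb.
suff : adj v w || adj u w'.
  rewrite adj_v adj_u (negbTE neq_wu) (negbTE neq_w'v) (negbTE neq_ww').
  by rewrite eq_sym (negbTE neq_ww').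
move: aD; rewrite !inE => /orP [] /eqP Ea; rewrite Ea ?adj_u ?adj_v in ab ac;
  case/orP: ab => /eqP Eb; case/orP: ac => /eqP Ec; rewrite Eb Ec in bc bc' cb;
  by rewrite ?eqxx in bc'; rewrite ?bc ?cb ?orbT.
Qed.

Definition part x :=
  if x \in digon then digon else x |: [set y | adj x y && [exists z, adj x z && adj y z]].

Lemma part_digon x : x \in digon -> part x = digon.
Proof. by rewrite /part => ->. Qed.

Lemma part_self x : x \in part x.
Proof. by rewrite /part; case: ifP => // _; rewrite setU11. Qed.

Lemma part_triangle x p q : x \notin digon -> p != q ->
  adj x p -> adj x q -> adj p q -> part x = [set x; p; q].
Proof.
move=> xD pq xp xq apq; apply/setP => y; rewrite /part (negbTE xD) !inE -orbA.
case: (eqVneq y x) => //= yx; apply/idP/idP => [/andP [xy /existsP [z /andP [xz yz]]]|].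
  apply: contraT; rewrite negb_or => /andP [yp yq].
  move: xz; rewrite -in_nbhd (nbhd3 pq _ _ xp xq xy) ?(eq_sym p) ?(eq_sym q) //.
  rewrite !inE -orbA => /or3P [] /eqP Ez; rewrite Ez in yz; exfalso.
  - apply: (no_K4_minus_edge (a := x) (b := p) (c := q) (d := y)) => //;
      by rewrite 1?eq_sym // adj_sym.
  - apply: (no_K4_minus_edge (a := x) (b := q) (c := p) (d := y)) => //;
      by rewrite 1?eq_sym // adj_sym.
  - by have := adj_neq yz; rewrite eqxx.
by case/orP => /eqP ->; rewrite ?xp ?xq /=; apply/existsP;
  [exists q; rewrite xq | exists p; rewrite xp adj_sym].
Qed.

Lemma part_out x : x \notin digon ->
  exists p q, [/\ part x = [set x; p; q], p != q, adj x p, adj x q & adj p q].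
Proof.
move=> xD; have : 2 < #|nbhd x| by rewrite card_nbhd_out.
case/card_gt2P => [a [b [c [[xa xb xc] [ab bc ca]]]]]; rewrite !in_nbhd in xa xb xc.
have triangle p q : p != q -> adj x p -> adj x q -> adj p q ->
    exists p q, [/\ part x = [set x; p; q], p != q, adj x p, adj x q & adj p q].
  by move=> pq xp xq apq; exists p, q; rewrite (part_triangle xD pq xp xq apq).
have ac : a != c by rewrite eq_sym.
case/orP: (m_claw xa xb xc ab ac bc) => [/orP [] |]; [exact: triangle | exact: triangle |].
exact: triangle.
Qed.

Lemma part_eq x y : y \in part x -> part y = part x.
Proof.
case: (boolP (x \in digon)) => xD; first by rewrite part_digon // => yD; rewrite part_digon.
have [p [q [-> pq xp xq apq]]] := part_out xD.
have out a b c : adj a b -> adj a c -> adj b c -> a \notin digon.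
  by move=> ab ac bc; apply/negP => aD; apply: digon_no_triangle aD ab ac bc.
rewrite !inE -orbA => /or3P [] /eqP ->; first by rewrite (part_triangle xD pq xp xq apq).
  have px : adj p x by rewrite adj_sym.
  by rewrite (part_triangle (out p x q px apq xq) (adj_neq xq) px apq xq) [p |: _]setUC.
have [qx qp] : adj q x /\ adj q p by rewrite !(adj_sym q).
by rewrite (part_triangle (out q x p qx qp xp) (adj_neq xp) qx qp xp) -setUA setUC.
Qed.

Lemma part_clique x y z : y \in part x -> z \in part x -> y != z -> adj y z.
Proof.
case: (boolP (x \in digon)) => xD.
  have uv : adj u v by rewrite /adj neq_uv m_uv.
  rewrite part_digon // !inE => /orP [] /eqP -> /orP [] /eqP ->; rewrite ?eqxx //.
  by rewrite adj_sym.
have [p [q [-> pq xp xq apq]]] := part_out xD.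
rewrite !inE -!orbA => /or3P [] /eqP -> /or3P [] /eqP ->; rewrite ?eqxx // => _;
  by rewrite // adj_sym.
Qed.

Lemma card_part x : #|part x| = if x \in digon then 2 else 3.
Proof.
case: ifPn => [xD|xD]; first by rewrite part_digon // cards2 neq_uv.
have [p [q [-> pq xp xq _]]] := part_out xD.
by rewrite cards3 // ?(adj_neq xp) ?(adj_neq xq).
Qed.

Lemma card_nbhd_part x : #|nbhd x| = #|part x|.
Proof.
rewrite card_part; case: ifPn => [|/card_nbhd_out //].
by rewrite !inE => /orP [] /eqP ->; rewrite ?nbhd_u ?nbhd_v cards2 eq_sym ?neq_wv ?neq_w'u.
Qed.

Definition mate x := odflt x [pick z in nbhd x :\: part x].

Lemma nbhd_diff_part x : nbhd x :\: part x = [set mate x].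
Proof.
have nbhd_part : nbhd x :&: part x = part x :\ x.
  apply/setP => y; rewrite in_setI in_setD1 in_nbhd.
  case: (eqVneq y x) => [->|yx]; first by rewrite /adj eqxx.
  case yx_part: (y \in part x); rewrite ?andbF //.
  by rewrite (part_clique (part_self x) yx_part) // eq_sym.
have /cards1P [c diff_c] : #|nbhd x :\: part x| == 1.
  rewrite cardsD nbhd_part card_nbhd_part (cardsD1 x (part x)) part_self.
  by rewrite add1n subSnn.
by rewrite /mate diff_c; case: pickP => [z|/(_ c)]; rewrite inE ?eqxx // => /eqP ->.
Qed.

Lemma mate_spec x z : (adj x z && (z \notin part x)) = (z == mate x).
Proof. by rewrite -in_set1 -nbhd_diff_part in_setD in_nbhd andbC. Qed.

Lemma adj_mate x : adj x (mate x).
Proof. by have := mate_spec x (mate x); rewrite eqxx => /andP []. Qed.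

Lemma mate_out x : mate x \notin part x.
Proof. by have := mate_spec x (mate x); rewrite eqxx => /andP []. Qed.

Lemma adj_part_mate x z : adj x z -> z \in part x \/ z = mate x.
Proof.
move=> xz; case: (boolP (z \in part x)) => zx; [by left | right].
by apply/eqP; rewrite -mate_spec xz.
Qed.

Lemma card_part_bounds x : 1 < #|part x| <= 3.
Proof. by rewrite card_part; case: ifP. Qed.

Lemma card_parts : #|T| + 1 = 3 * #|parts part|.
Proof.
have digon_part : digon \in parts part.
  by rewrite -(part_digon (x := u)) ?imset_f // !inE eqxx.
rewrite (card_sum_parts part_self part_eq) (big_setD1 digon digon_part) /=.
rewrite (eq_bigr (fun _ => 3)); last first.
  move=> A /setD1P [AD /imsetP [x _ Ax]]; rewrite Ax card_part.
  by case: ifP => // xD; move: AD; rewrite Ax part_digon ?eqxx.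
rewrite /= sum_nat_const cards2 neq_uv (cardsD1 digon (parts part)) digon_part /=; lia.
Qed.

Lemma gammaP_claw_free_cubic : 6 * gammaP m + 2 <= #|T|.
Proof.
have := twice_gammaP_le_card_parts adj_sym part_self part_eq part_clique
  adj_mate mate_out adj_part_mate card_part_bounds.
have := card_even adj_sym part_self part_eq adj_mate mate_out adj_part_mate.
have := odd_double_half #|T|; have := card_parts.
by case: (odd #|T|) => //=; lia.
Qed.

End Digon.
End ClawFreeCubic.

Theorem corollary2p7 (T : finType) (m : T -> T -> nat) (u v : T) :
  symmetric_mult m -> loopless m -> cubic m ->
  two_edge_connected m ->
  u != v -> m u v = 2 ->
  (forall x y : T, 1 < m x y -> (x == u) && (y == v) || (x == v) && (y == u)) ->
  claw_free m -> diamond_free m ->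
  6 * gammaP m + 2 <= #|T|.
Proof.
move=> m_sym m_loopless m_cubic m_2ec neq_uv m_uv m_simple m_claw m_diamond.
have [w [nbhd_u neq_wv neq_wu]] := nbhd_double m_loopless m_cubic neq_uv m_uv.
have neq_vu : v != u by rewrite eq_sym.
have m_vu : m v u = 2 by rewrite m_sym.
have [w' [nbhd_v neq_w'u neq_w'v]] := nbhd_double m_loopless m_cubic neq_vu m_vu.
exact: (gammaP_claw_free_cubic m_sym m_loopless m_cubic m_2ec neq_uv m_uv m_simple
  m_claw m_diamond nbhd_u nbhd_v neq_wv neq_wu neq_w'u neq_w'v).
Qed.
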